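(* Let $n\ge2$, let $A$ be an $n\times n$ matrix with strictly positive entries, let $p:=\sqrt{R(A)}$, and define for $h\ge0$ \[ \Theta(h)=2\log\!\left(\frac{1+p\,e^{h/2}}{p+e^{h/2}}\right). \] Then for all $x,y\in\mathbb{R}^n_{>0}$, $d_H(Ax,Ay)\le\Theta(d_H(x,y))$. Moreover, if $p>1$, then $\Theta$ is increasing and concave on $[0,\infty)$, $\Theta(0)=0$, $\Theta'(0)=\kappa(A):=\frac{p-1}{p+1}$, $\lim_{h\to\infty}\Theta(h)=\log R(A)$, and $\Theta(h)\le\kappa(A)h$ for all $h\ge0$; consequently $d_H(Ax,Ay)\le\kappa(A)\,d_H(x,y)$ for all $x,y\in\mathbb{R}^n_{>0}$.
   Context: For a matrix $A=(a_{ik})$ with strictly positive entries, its distortion is $R(A)=\max_{i,j,k,\ell}\frac{a_{ik}a_{j\ell}}{a_{i\ell}a_{jk}}$. For $x,y\in\mathbb{R}^n_{>0}$, $\mathrm{Dist}(x,y)=\max_{i,j}\frac{y_ix_j}{y_jx_i}$ and the Hilbert metric is $d_H(x,y)=\log\mathrm{Dist}(x,y)$. *)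

From HB Require Import structures.
From mathcomp Require Import all_boot all_order all_algebra.
From mathcomp Require Import all_classical all_reals all_analysis.
Set Implicit Arguments. Unset Strict Implicit. Unset Printing Implicit Defensive.
Import Order.TTheory GRing.Theory Num.Theory.
Local Open Scope ring_scope.

Definition posmx (R : realType) (m n : nat) (A : 'M[R]_(m, n)) : Prop :=
  forall i j, 0 < A i j.

Definition distortion (R : realType) (n : nat) (A : 'M[R]_n) : R :=
  \big[Num.max/0]_(q : 'I_n * 'I_n * 'I_n * 'I_n)
     (let: (i, j, k, l) := q in (A i k * A j l) / (A i l * A j k)).

Definition Dist (R : realType) (n : nat) (x y : 'cV[R]_n) : R :=
  \big[Num.max/0]_(q : 'I_n * 'I_n)
     (let: (i, j) := q in (y i 0 * x j 0) / (y j 0 * x i 0)).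

Definition dH (R : realType) (n : nat) (x y : 'cV[R]_n) : R := ln (Dist x y).

Definition sqrtR_dist (R : realType) (n : nat) (A : 'M[R]_n) : R :=
  Num.sqrt (distortion A).

Definition Theta (R : realType) (n : nat) (A : 'M[R]_n) (h : R) : R :=
  let p := sqrtR_dist A in
  2 * ln ((1 + p * expR (h / 2)) / (p + expR (h / 2))).

Definition kappa (R : realType) (n : nat) (A : 'M[R]_n) : R :=
  let p := sqrtR_dist A in (p - 1) / (p + 1).

(* For positive x, y put z_k = y_k / x_k, so that (Ay)_i = sum_k A_ik x_k z_k and
   (Ax)_i = sum_k A_ik x_k.  Each term of Dist (Ax) (Ay) is then a cross-ratio of
   two z-averages with weights r_k = A_ik x_k and s_k = A_jk x_k, whose mutual
   distortion r_k s_l / (r_l s_k) is at most p^2 = R(A), while the values z spread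
   by a factor at most M^2 = Dist(x, y).  Splitting the indices according to the
   sign of the defect reduces the estimate to two blocks, where it becomes the
   inequality ((1 + pM) / (p + M))^2 >= cross-ratio, and the logarithm of that
   bound is exactly Theta(d_H(x, y)).
   Theta' = (p^2 - 1) E / ((1 + pE)(p + E)) with E = e^(h/2) is positive and
   decreasing on [0, oo), so Theta is increasing and lies below its tangents:
   this gives concavity and, at h = 0 where the slope is kappa, Theta(h) <= kappa h. *)

From HB Require Import structures.
From mathcomp Require Import all_boot all_order all_algebra.
From mathcomp Require Import all_classical all_reals all_analysis.
Import Order.TTheory GRing.Theory Num.Theory numFieldNormedType.Exports.
From mathcomp Require Import ring lra.
Set Implicit Arguments.
Unset Strict Implicit.
Unset Printing Implicit Defensive.
Local Open Scope classical_set_scope.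
Local Open Scope ring_scope.

Section Sums.
Variables (R : realFieldType) (I : finType).

Lemma sum_mul_ge_split (P : pred I) (c z : I -> R) (m K : R) :
  (forall k, P k -> c k <= 0) -> (forall k, ~~ P k -> 0 <= c k) ->
  (forall k, m <= z k <= K * m) ->
  m * (K * \sum_(k | P k) c k + \sum_(k | ~~ P k) c k) <= \sum_k c k * z k.
Proof.
move=> cP cNP z_bnd; rewrite [X in _ <= X](bigID P) /= mulrDr mulrA !mulr_sumr.
apply: lerD; apply: ler_sum => k Pk; have /andP[mz zK] := z_bnd k.
  by rewrite mulrC; apply: ler_wnM2l; [exact: cP | rewrite mulrC].
by rewrite mulrC; apply: ler_wpM2l; [exact: cNP | ].
Qed.

Lemma sum_cross_le (P P' : pred I) (r s : I -> R) (e : R) :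
  (forall k l, r k * s l <= e * (r l * s k)) ->
  (\sum_(k | P k) r k) * (\sum_(l | P' l) s l) <=
    e * ((\sum_(l | P' l) r l) * (\sum_(k | P k) s k)).
Proof.
move=> rs; rewrite [X in e * X]mulrC !big_distrlr mulr_sumr /=.
apply: ler_sum => k _; rewrite mulr_sumr; apply: ler_sum => l _.
by rewrite [s k * _]mulrC.
Qed.

End Sums.

Section BirkhoffInequality.
Variable R : realFieldType.

Definition birkhoff_factor (p M : R) : R := ((1 + p * M) / (p + M)) ^+ 2.

Section Factor.
Variables p M : R.
Local Notation Q := (birkhoff_factor p M).

Lemma birkhoff_factorE : 1 <= p -> 1 <= M -> Q * (p + M) ^+ 2 = (1 + p * M) ^+ 2.
Proof.
move=> p_ge1 M_ge1; have pM_gt0 : 0 < p + M by lra.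
by rewrite /birkhoff_factor expr_div_n mulfVK // sqrf_eq0 gt_eqF.
Qed.

Lemma birkhoff_factor_ge1 : 1 <= p -> 1 <= M -> 1 <= Q.
Proof.
move=> p_ge1 M_ge1; have pM_gt0 : 0 < p + M by lra.
by rewrite /birkhoff_factor expr_ge1 // ?ler_pdivlMr ?divr_ge0 //; nra.
Qed.

Lemma birkhoff_quadratic (a b c d : R) : 1 <= p -> 1 <= M ->
  0 <= a -> 0 <= b -> 0 <= c -> 0 <= d -> a * d <= p ^+ 2 * (b * c) ->
  (c + d) * (b + M ^+ 2 * a) <= Q * (a + b) * (d + M ^+ 2 * c).
Proof.
move=> p_ge1 M_ge1 a0 b0 c0 d0 adbc; rewrite -subr_ge0.
have Q_ge1 := birkhoff_factor_ge1 p_ge1 M_ge1.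
have QM_ge1 : 1 <= Q * M ^+ 2 by rewrite -[1]mulr1 ler_pM // expr_ge1 //; lra.
pose E0 := b * ((Q - 1) * d + (Q * M ^+ 2 - 1) * c).
pose e1 := Q * (d + M ^+ 2 * c) - M ^+ 2 * (c + d).
have E0_ge0 : 0 <= E0 by rewrite mulr_ge0 // addr_ge0 // mulr_ge0 // subr_ge0.
have -> : Q * (a + b) * (d + M ^+ 2 * c) - (c + d) * (b + M ^+ 2 * a) = E0 + a * e1.
  by rewrite /E0 /e1; ring.
have [e1_ge0|e1_lt0] := lerP 0 e1; first by rewrite addr_ge0 // mulr_ge0.
have d_gt0 : 0 < d.
  rewrite lt_neqAle d0 andbT eq_sym; apply/eqP => d_eq0; move: e1_lt0.
  have : 0 <= Q - 1 by rewrite subr_ge0.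
  move=> /(mulr_ge0 (mulr_ge0 (sqr_ge0 M) c0)).
  by rewrite /e1 d_eq0; lra.
(* [Q (p + M)^2 = (1 + p M)^2] makes [d E0 + p^2 b c e1] a perfect square. *)
have square : d * E0 + p ^+ 2 * (b * c) * e1 = b * (Q - 1) * (p * M * c - d) ^+ 2.
  have HQ := birkhoff_factorE p_ge1 M_ge1.
  apply/eqP; rewrite -subr_eq0; apply/eqP.
  transitivity (b * c * d * (Q * (p + M) ^+ 2 - (1 + p * M) ^+ 2)).
    by rewrite /E0 /e1; ring.
  by rewrite HQ subrr mulr0.
have : 0 <= d * E0 + a * d * e1.
  apply: le_trans (_ : 0 <= d * E0 + p ^+ 2 * (b * c) * e1) _.
    by rewrite square mulr_ge0 ?sqr_ge0 // mulr_ge0 // subr_ge0.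
  by rewrite lerD2l ler_wnM2r // ltW.
by rewrite [a * d]mulrC -mulrA -mulrDr pmulr_rge0.
Qed.

End Factor.

Lemma birkhoff_sum_le (I : finType) (k0 : I) (p M : R)
    (r s z : I -> R) :
  1 <= p -> 1 <= M ->
  (forall k, 0 <= r k) -> (forall k, 0 <= s k) -> (forall k, 0 <= z k) ->
  (forall k l, r k * s l <= p ^+ 2 * (r l * s k)) ->
  (forall k l, z k <= M ^+ 2 * z l) ->
  (\sum_k r k * z k) * (\sum_k s k) <=
    birkhoff_factor p M * ((\sum_k s k * z k) * (\sum_k r k)).
Proof.
move=> p_ge1 M_ge1 r_ge0 s_ge0 z_ge0 rs zz.
set Q := birkhoff_factor p M; set Rt := \sum_k r k; set St := \sum_k s k.
pose c k := Q * s k * Rt - r k * St.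
pose P k := c k < 0.
have [km _ km_min] := arg_minP z (erefl : xpredT k0).
have z_bnd k : z km <= z k <= M ^+ 2 * z km by rewrite km_min // zz.
(* Write the defect as [\sum_k c k * z k] and replace [z k] by its minimum where
   [c k >= 0] and by [M^2] times its minimum where [c k < 0]: this leaves the
   two-block inequality [birkhoff_quadratic]. *)
rewrite -subr_ge0.
have -> : Q * ((\sum_k s k * z k) * Rt) - (\sum_k r k * z k) * St = \sum_k c k * z k.
  by rewrite mulrA mulr_sumr !mulr_suml -sumrB; apply: eq_bigr => k _; rewrite /c; ring.
apply: le_trans (sum_mul_ge_split (P := P) _ _ z_bnd); last 2 first.
- by move=> k /ltW.
- by move=> k; rewrite -leNgt.
have sum_c (P' : pred I) :
    \sum_(k | P' k) c k = Q * (\sum_(k | P' k) s k) * Rt - (\sum_(k | P' k) r k) * St.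
  by rewrite sumrB -!mulr_suml -mulr_sumr.
rewrite mulr_ge0 // !sum_c.
pose a := \sum_(k | P k) r k; pose b := \sum_(k | ~~ P k) r k.
pose cc := \sum_(k | P k) s k; pose d := \sum_(k | ~~ P k) s k.
have -> : Rt = a + b by rewrite /Rt (bigID P).
have -> : St = cc + d by rewrite /St (bigID P).
have := birkhoff_quadratic p_ge1 M_ge1 (sumr_ge0 _ (fun k _ => r_ge0 k))
  (sumr_ge0 _ (fun k _ => r_ge0 k)) (sumr_ge0 _ (fun k _ => s_ge0 k))
  (sumr_ge0 _ (fun k _ => s_ge0 k)) (sum_cross_le P (fun k => ~~ P k) rs).
rewrite -/a -/b -/cc -/d -/Q; lra.
Qed.

End BirkhoffInequality.

Lemma concave_of_le_tangent (R : realFieldType) (f df : R -> R) :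
  (forall x c, 0 <= x -> 0 <= c -> f x <= f c + df c * (x - c)) ->
  forall a b t, 0 <= a -> 0 <= b -> 0 <= t <= 1 ->
    t * f a + (1 - t) * f b <= f (t * a + (1 - t) * b).
Proof.
move=> tangent a b t a_ge0 b_ge0 /andP[t_ge0 t_le1].
set c := t * a + (1 - t) * b.
have c_ge0 : 0 <= c by rewrite addr_ge0 // mulr_ge0 // subr_ge0.
have le_a := tangent a c a_ge0 c_ge0; have le_b := tangent b c b_ge0 c_ge0.
suff -> : f c = t * (f c + df c * (a - c)) + (1 - t) * (f c + df c * (b - c)).
  by rewrite lerD // ler_wpM2l // subr_ge0.
by rewrite /c; ring.
Qed.

Lemma le_tangent_of_antitone_derive (R : realType) (f df : R -> R) :
  (forall x : R, is_derive x 1 f (df x)) ->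
  (forall x y, 0 <= x -> x <= y -> df y <= df x) ->
  forall x c, 0 <= x -> 0 <= c -> f x <= f c + df c * (x - c).
Proof.
move=> f' df_anti x c x_ge0 c_ge0.
have f_cont (a b : R) : {within `[a, b], continuous f}.
  by apply: derivable_within_continuous => z _; apply: ex_derive.
have [le_xc|lt_cx] := lerP x c.
- have [d] := MVT_segment le_xc (fun z _ => f' z) (f_cont x c).
  rewrite in_itv /= => /andP[le_xd le_dc] Ediff.
  have := df_anti d c (le_trans x_ge0 le_xd) le_dc.
  have : 0 <= c - x by lra.
  nra.
- have [d] := MVT_segment (ltW lt_cx) (fun z _ => f' z) (f_cont c x).
  rewrite in_itv /= => /andP[le_cd le_dx] Ediff.
  have := df_anti c d c_ge0 le_cd.
  have : 0 <= x - c by lra.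
  nra.
Qed.

Section Theta.
Variable R : realType.

Definition theta (p h : R) : R :=
  2 * ln ((1 + p * expR (h / 2)) / (p + expR (h / 2))).

Definition dtheta (p h : R) : R :=
  (p ^+ 2 - 1) * expR (h / 2) / ((1 + p * expR (h / 2)) * (p + expR (h / 2))).

Lemma theta0 (p : R) : theta p 0 = 0.
Proof.
rewrite /theta mul0r expR0 mulr1 [1 + p]addrC.
(* The case [p = -1] is saved by the junk values [0 / 0 = 0] and [ln 0 = 0]. *)
have [->|pn0] := eqVneq (p + 1) 0; first by rewrite invr0 mulr0 ln0 ?mulr0.
by rewrite divff // ln1 mulr0.
Qed.

Lemma dtheta0 (p : R) : 0 <= p -> dtheta p 0 = (p - 1) / (p + 1).
Proof.
move=> p_ge0; rewrite /dtheta mul0r expR0 !mulr1 [1 + p]addrC.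
by field; rewrite gt_eqF //; lra.
Qed.

Lemma is_derive_ln_comp (f : R -> R) (x df : R) :
  0 < f x -> is_derive x 1 f df -> is_derive x 1 (fun y => ln (f y)) (df / f x).
Proof.
move=> fx_gt0 f'; apply: is_derive_eq (is_derive1_comp (is_derive1_ln fx_gt0) f') _.
by rewrite mulrC.
Qed.

Lemma is_derive_theta (p h : R) : 0 <= p -> is_derive h 1 (theta p) (dtheta p h).
Proof.
move=> p_ge0; have E_gt0 (x : R) : 0 < expR (x / 2) := expR_gt0 _.
have num_gt0 x : 0 < 1 + p * expR (x / 2) by have := E_gt0 x; nra.
have den_gt0 x : 0 < p + expR (x / 2) by have := E_gt0 x; lra.
have -> : theta p = fun x => 2 * (ln (1 + p * expR (x / 2)) - ln (p + expR (x / 2))).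
  by apply/funext => x; rewrite /theta ln_div ?posrE.
have Dnum : is_derive h 1 (fun x => 1 + p * expR (x / 2)) (p * (expR (h / 2) / 2)).
  by apply: is_derive_eq; rewrite /GRing.scale /=; ring.
have Dden : is_derive h 1 (fun x => p + expR (x / 2)) (expR (h / 2) / 2).
  by apply: is_derive_eq; rewrite /GRing.scale /=; ring.
have Lnum := is_derive_ln_comp (f := fun x => 1 + p * expR (x / 2)) (num_gt0 h) Dnum.
have Lden := is_derive_ln_comp (f := fun x => p + expR (x / 2)) (den_gt0 h) Dden.
(* [Lnum] and [Lden] are picked up by the [is_derive] instance search. *)
apply: is_derive_eq; rewrite /GRing.scale /dtheta /=.
by field; rewrite !gt_eqF.
Qed.

Lemma dtheta_gt0 (p h : R) : 1 < p -> 0 < dtheta p h.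
Proof.
move=> p_gt1; have E_gt0 := expR_gt0 (h / 2).
by rewrite /dtheta divr_gt0 ?mulr_gt0 //; nra.
Qed.

Lemma dtheta_antitone (p x y : R) : 1 <= p -> 0 <= x -> x <= y -> dtheta p y <= dtheta p x.
Proof.
move=> p_ge1 x_ge0 le_xy.
have Ex_ge1 : 1 <= expR (x / 2) by rewrite -expR0 ler_expR divr_ge0.
have Exy : expR (x / 2) <= expR (y / 2) by rewrite ler_expR ler_pM2r // invr_gt0.
rewrite /dtheta; set a := expR (x / 2) in Ex_ge1 Exy *; set b := expR (y / 2) in Exy *.
have den_gt0 e : 1 <= e -> 0 < (1 + p * e) * (p + e) by move=> ?; rewrite mulr_gt0 //; nra.
rewrite ler_pdivrMr ?den_gt0 1?mulrAC ?ler_pdivlMr ?den_gt0 //; try lra.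
rewrite -subr_ge0.
have -> : (p ^+ 2 - 1) * a * ((1 + p * b) * (p + b)) - (p ^+ 2 - 1) * b * ((1 + p * a) * (p + a))
    = (p ^+ 2 - 1) * (p * (b - a) * (a * b - 1)) by ring.
by rewrite mulr_ge0 ?mulr_ge0 //; nra.
Qed.

Lemma theta_le_tangent (p : R) : 1 <= p -> forall x c, 0 <= x -> 0 <= c ->
  theta p x <= theta p c + dtheta p c * (x - c).
Proof.
move=> p_ge1; apply: le_tangent_of_antitone_derive => [z|z w].
  by apply: is_derive_theta; lra.
exact: dtheta_antitone.
Qed.

Lemma theta_le_slope0 (p h : R) : 1 <= p -> 0 <= h -> theta p h <= dtheta p 0 * h.
Proof.
move=> p_ge1 h_ge0.
by have := theta_le_tangent p_ge1 h_ge0 (lexx 0); rewrite theta0 add0r subr0.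
Qed.

Lemma theta_birkhoff_factor (p h : R) : 0 <= p ->
  theta p h = ln (birkhoff_factor p (expR (h / 2))).
Proof.
move=> p_ge0; have E_gt0 := expR_gt0 (h / 2).
rewrite /theta /birkhoff_factor mulr_natl lnXn //.
by apply: divr_gt0; nra.
Qed.

Lemma theta_increasing (p a b : R) : 1 < p -> a < b -> theta p a < theta p b.
Proof.
move=> p_gt1 lt_ab; have p_ge0 : 0 <= p by lra.
have theta_derive (z : R) : is_derive z 1 (theta p) (dtheta p z) := is_derive_theta z p_ge0.
have theta_cont : {within `[a, b], continuous (theta p)}.
  by apply: derivable_within_continuous => z _; apply: ex_derive.
have [c _ Ediff] := MVT lt_ab (fun z _ => theta_derive z) theta_cont.
by rewrite -subr_gt0 Ediff mulr_gt0 ?dtheta_gt0 // subr_gt0.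
Qed.

Lemma theta_ratio_cvg (p : R) : 1 < p ->
  (1 + p * expR (h / 2)) / (p + expR (h / 2)) @[h --> +oo] --> p.
Proof.
move=> p_gt1; apply/cvgrPdist_lt => e e_gt0.
exists (2 * (p ^+ 2 - 1) / e); split; first by rewrite num_real.
move=> h h_big; have E_ge := expR_ge1Dx (h / 2).
have den_gt0 : 0 < p + expR (h / 2) by have := expR_gt0 (h / 2); lra.
have -> : p - (1 + p * expR (h / 2)) / (p + expR (h / 2)) =
    (p ^+ 2 - 1) / (p + expR (h / 2)) by field; rewrite gt_eqF.
rewrite ger0_norm ?divr_ge0 ?ltr_pdivrMr ?(ltW den_gt0) //; last by nra.
move: h_big; rewrite ltr_pdivrMr // => h_big.
have := ler_wpM2l (ltW e_gt0) E_ge.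
have : 0 < e * p by rewrite mulr_gt0 //; lra.
rewrite !mulrDr mulr1 => ep eE.
have : e * (h / 2) = h * e / 2 by rewrite mulrC mulrAC.
lra.
Qed.

Lemma theta_cvg (p : R) : 1 < p -> theta p h @[h --> +oo] --> ln (p ^+ 2).
Proof.
move=> p_gt1; have p_gt0 : 0 < p by lra.
rewrite lnXn // -mulr_natl; apply: cvgMl_tmp.
exact: (continuous_cvg _ (continuous_ln p_gt0) (theta_ratio_cvg p_gt1)).
Qed.

End Theta.

Section HilbertMetric.
Variables (R : realType) (n : nat).
Implicit Types (A : 'M[R]_n) (x y : 'cV[R]_n).

Lemma Dist_ub x y i j : y i 0 * x j 0 / (y j 0 * x i 0) <= Dist x y.
Proof. exact: (le_bigmax _ _ (i, j)). Qed.

Lemma distortion_ub A i j k l : A i k * A j l / (A i l * A j k) <= distortion A.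
Proof. exact: (le_bigmax _ _ (i, j, k, l)). Qed.

Lemma Dist_ge1 (k0 : 'I_n) x y : posmx x -> posmx y -> 1 <= Dist x y.
Proof.
move=> x_gt0 y_gt0; apply: le_trans (Dist_ub x y k0 k0).
by rewrite divff // mulf_neq0 // gt_eqF.
Qed.

Lemma distortion_ge1 (k0 : 'I_n) A : posmx A -> 1 <= distortion A.
Proof.
move=> A_gt0; apply: le_trans (distortion_ub A k0 k0 k0 k0).
by rewrite divff // mulf_neq0 // gt_eqF.
Qed.

Lemma dH_ge0 (k0 : 'I_n) x y : posmx x -> posmx y -> 0 <= dH x y.
Proof. by move=> x_gt0 y_gt0; rewrite ln_ge0 // (Dist_ge1 k0). Qed.

Lemma posmx_mulmx A x : posmx A -> posmx x -> posmx (A *m x).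
Proof.
move=> A_gt0 x_gt0 i j; rewrite mxE (bigD1 i) //= ltr_pwDl ?mulr_gt0 //.
by rewrite sumr_ge0 // => k _; rewrite mulr_ge0 // ltW.
Qed.

Lemma Dist_mulmx_le A x y (p M : R) :
  posmx A -> posmx x -> posmx y -> 1 <= p -> 1 <= M ->
  distortion A <= p ^+ 2 -> Dist x y <= M ^+ 2 ->
  Dist (A *m x) (A *m y) <= birkhoff_factor p M.
Proof.
move=> A_gt0 x_gt0 y_gt0 p_ge1 M_ge1 distA distxy.
have factor_ge1 := birkhoff_factor_ge1 p_ge1 M_ge1.
apply: bigmax_le => [|[i j] _ /=]; first exact: le_trans ler01 factor_ge1.
pose z k := y k 0 / x k 0.
have Ax i0 : (A *m x) i0 0 = \sum_k A i0 k * x k 0 by rewrite mxE.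
have Ay i0 : (A *m y) i0 0 = \sum_k A i0 k * x k 0 * z k.
  by rewrite mxE; apply: eq_bigr => k _; rewrite /z; field; rewrite gt_eqF.
rewrite !Ax !Ay ler_pdivrMr; last first.
  by rewrite -!Ay -Ax mulr_gt0 // posmx_mulmx.
apply: (birkhoff_sum_le (r := fun k => A i k * x k 0) (s := fun k => A j k * x k 0) i)
  => // [k|k|k|k l|k l].
- by rewrite mulr_ge0 // ltW.
- by rewrite mulr_ge0 // ltW.
- by rewrite divr_ge0 // ltW.
- have -> : A i k * x k 0 * (A j l * x l 0) =
      A i k * A j l / (A i l * A j k) * (A i l * x l 0 * (A j k * x k 0)).
    by field; rewrite !gt_eqF.
  apply: ler_wpM2r; first by rewrite !mulr_ge0 // ltW.
  exact: le_trans (distortion_ub A i j k l) distA.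
- have -> : z k = y k 0 * x l 0 / (y l 0 * x k 0) * z l by rewrite /z; field; rewrite !gt_eqF.
  apply: ler_wpM2r; first by rewrite divr_ge0 // ltW.
  exact: le_trans (Dist_ub x y k l) distxy.
Qed.

Lemma dH_mulmx_le_Theta (k0 : 'I_n) A x y :
  posmx A -> posmx x -> posmx y -> dH (A *m x) (A *m y) <= Theta A (dH x y).
Proof.
move=> A_gt0 x_gt0 y_gt0.
set p := sqrtR_dist A; set h := dH x y; set M := expR (h / 2).
have distA_ge1 := distortion_ge1 k0 A_gt0.
have p2 : p ^+ 2 = distortion A by rewrite sqr_sqrtr // (le_trans ler01).
have p_ge1 : 1 <= p by rewrite -sqrtr1 ler_sqrt // (le_trans ler01).
have Dxy_ge1 := Dist_ge1 k0 x_gt0 y_gt0.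
have M2 : M ^+ 2 = Dist x y.
  by rewrite /M -expRM_natr divfK ?pnatr_eq0 // lnK // posrE (lt_le_trans ltr01).
have M_ge1 : 1 <= M by rewrite -expR0 ler_expR divr_ge0 // ln_ge0.
have Ax_gt0 := posmx_mulmx A_gt0 x_gt0; have Ay_gt0 := posmx_mulmx A_gt0 y_gt0.
rewrite /Theta -/p -/(theta p h) theta_birkhoff_factor ?(le_trans ler01) // -/M.
have DA_gt0 := lt_le_trans ltr01 (Dist_ge1 k0 Ax_gt0 Ay_gt0).
have factor_gt0 := lt_le_trans ltr01 (birkhoff_factor_ge1 p_ge1 M_ge1).
by rewrite /dH ler_ln ?posrE // Dist_mulmx_le ?p2 ?M2.
Qed.

End HilbertMetric.

Theorem mainTheorem12 (R : realType) (n : nat) (A : 'M[R]_n) :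
  (1 < n)%N -> posmx A ->
  (forall x y : 'cV[R]_n, posmx x -> posmx y ->
     dH (A *m x) (A *m y) <= Theta A (dH x y)) /\
  (1 < sqrtR_dist A ->
     (forall a b : R, 0 <= a -> a < b -> Theta A a < Theta A b) /\
         (forall a b t : R, 0 <= a -> 0 <= b -> 0 <= t <= 1 ->
            t * Theta A a + (1 - t) * Theta A b <= Theta A (t * a + (1 - t) * b)) /\
         Theta A 0 = 0 /\
         is_derive (0 : R) 1 (Theta A) (kappa A) /\
         (Theta A h @[h --> +oo%R] --> ln (distortion A)) /\
         (forall h : R, 0 <= h -> Theta A h <= kappa A * h) /\
         (forall x y : 'cV[R]_n, posmx x -> posmx y ->
            dH (A *m x) (A *m y) <= kappa A * dH x y)).
Proof.
move=> n_gt1 A_gt0; pose k0 : 'I_n := Ordinal (ltnW n_gt1).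
have birkhoff x y := @dH_mulmx_le_Theta R n k0 A x y A_gt0.
split=> // p_gt1; set p := sqrtR_dist A in p_gt1.
have p2 : p ^+ 2 = distortion A.
  by rewrite sqr_sqrtr // (le_trans ler01) // (distortion_ge1 k0).
have -> : Theta A = theta p by [].
have -> : kappa A = dtheta p 0 by rewrite dtheta0 //; lra.
have slope0 h : 0 <= h -> theta p h <= dtheta p 0 * h := theta_le_slope0 (ltW p_gt1).
split; first by move=> a b _; exact: theta_increasing.
split; first exact: concave_of_le_tangent (theta_le_tangent (ltW p_gt1)).
split; first exact: theta0.
split; first by apply: is_derive_theta; lra.
split; first by rewrite -p2; exact: theta_cvg.
split=> // x y x_gt0 y_gt0.
exact: le_trans (birkhoff x y x_gt0 y_gt0) (slope0 _ (dH_ge0 k0 x_gt0 y_gt0)).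
Qed.
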